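(* Let $n\ge 2$ and $1\le \ell\le n-1$. Let $\mathbf{x}=(x_1,\dots,x_n)$ satisfy $x_1\le\dots\le x_\ell<0\le x_{\ell+1}\le\dots\le x_n$, and let $M=-\mathbf{x}^T\mathbf{x}$, with pairwise distinct off-diagonal entries. Then $\beta_k(t)=0$ for all $k>0$ and all $t\in[0,1]$.
   Context: Betti curves of a symmetric matrix. Let $M$ be a real symmetric $n\times n$ matrix whose $\binom{n}{2}$ off-diagonal entries $M_{ij}$ ($i<j$) are pairwise distinct. The ordering matrix $\widehat{M}$ is defined by $\widehat{M}_{ij}=k$ if $M_{ij}$ is the $k$-th smallest off-diagonal entry. For $t\in[0,1]$, $G_t=G_t(M)$ is the graph on vertex set $\{1,\dots,n\}$ with edge set $\{\{i,j\} : \widehat{M}_{ij}\le t\binom{n}{2}\}$ (so edges are added in increasing order of the entries $M_{ij}$; $G_0$ has no edges and $G_1$ is complete). $X(G_t)$ is the clique complex of $G_t$ (every $k$-clique of $G_t$ is filled in by a $(k-1)$-dimensional simplex). The $i$-th Betti curve of $M$ is $\beta_i(t)=\operatorname{rank} H_i(X(G_t);\mathbf{k})$, with $H_i$ simplicial homology with coefficients in a fixed field $\mathbf{k}$. Here $\mathbf{x}$ is a row vector, so $\mathbf{x}^T\mathbf{x}$ is the $n\times n$ matrix with entries $x_ix_j$. *)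

From HB Require Import structures.
From mathcomp Require Import all_boot all_order all_algebra.
Set Implicit Arguments. Unset Strict Implicit. Unset Printing Implicit Defensive.
Import Order.TTheory GRing.Theory Num.Theory.
Local Open Scope ring_scope.

Section BettiCurves.
Variables (R : realFieldType) (n : nat).

Definition offdiag_distinct (M : 'M[R]_n) : Prop :=
  forall i j k l : 'I_n, (i < j)%N -> (k < l)%N -> M i j = M k l -> i = k /\ j = l.

(* ordering matrix: hatM_ij = k iff M_ij is the k-th smallest off-diagonal entry *)
Definition ordmx (M : 'M[R]_n) (i j : 'I_n) : nat :=
  (#|[set p : 'I_n * 'I_n | (p.1 < p.2)%N & M p.1 p.2 < M i j]|).+1.

Definition Gedge (M : 'M[R]_n) (t : R) (i j : 'I_n) : bool :=
  (i != j) && ((ordmx M i j)%:R <= t * ('C(n, 2))%:R).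

Definition simplices (M : 'M[R]_n) (t : R) (k : nat) : {set {set 'I_n}} :=
  [set s : {set 'I_n} | (#|s| == k.+1) &&
     [forall u in s, forall v in s, (u != v) ==> Gedge M t u v]].

End BettiCurves.

Section Homology.
Variables (F : fieldType) (R : realFieldType) (n : nat) (M : 'M[R]_n) (t : R).

Local Notation S k := (simplices M t k).

(* boundary d_{k+1} : C_{k+1} -> C_k (chains as row vectors, v |-> v *m bnd k);
   the face of tau = [v_0 < ... < v_{k+1}] omitting v_i gets sign (-1)^i *)
Definition bnd (k : nat) : 'M[F]_(#|S k.+1|, #|S k|) :=
  \matrix_(a < #|S k.+1|, b < #|S k|)
    (let tau : {set 'I_n} := @enum_val _ (mem (S k.+1)) a in
     let sg : {set 'I_n} := @enum_val _ (mem (S k)) b in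
     \sum_(v in tau | sg == tau :\ v) (-1) ^+ #|[set u in tau | (u < v)%N]|).

Definition betti (k : nat) : nat :=
  match k with
  | 0 => (#|S 0| - \rank (bnd 0))%N
  | k'.+1 => (\rank (kermx (bnd k')) - \rank (bnd k'.+1))%N
  end.

End Homology.

From HB Require Import structures.
From mathcomp Require Import all_boot all_order all_algebra.
From mathcomp Require Import ring lra zify.
Set Implicit Arguments. Unset Strict Implicit. Unset Printing Implicit Defensive.
Import Order.TTheory GRing.Theory Num.Theory.
Local Open Scope ring_scope.

(* The clique complex of G_t for M = -x^T x is acyclic in positive degrees, for
   EVERY real vector x.

   Chains are functions from vertex sets to F, with boundary
   [bdc]; the cone [cone w] with apex w is a chain homotopy ([cone_homotopy]).
   Call v dominated by w inside U when every neighbour of v in U other than w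
   is a neighbour of w, and v ~ w.  Then any cycle on the cliques of U is homologous, by
   the boundary of a cone over its part through v, to a cycle avoiding v
   ([push_off]).  If every vertex set of size >= 2 has a dominated vertex, peeling
   off dominated vertices one at a time shows that all cycles of dimension >= 1
   are boundaries ([cycle_is_boundary]), and hence the Betti numbers vanish
   ([betti_vanish]).

   Edges of G_t are downward closed in the weight
   -x_i x_j, and such a graph always has dominated vertices
   ([rank_one_dominated]): a set {a, b} of opposite signs is trivial; otherwise
   pick two vertices of the same sign and take as dominator the extreme one,
   according to whether an edge of weight >= 0 exists (the weight is invariant
   under x |-> -x, so the sign may be assumed nonpositive). *)

Lemma other_elem (T : finType) (A : {set T}) (w : T) :
  (1 < #|A|)%N -> exists2 v, v \in A & v != w.
Proof.
case/card_gt1P => a [b [aA bA ab]].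
by case: (a =P w) => [<-|/eqP]; [exists b; rewrite // eq_sym | exists a].
Qed.

Section Chains.
Variables (F : fieldType) (n : nat).
Implicit Types (s r : {set 'I_n}) (c e : {set 'I_n} -> F).

Definition sgn s (v : 'I_n) : F := (-1) ^+ #|[set u in s | (u < v)%N]|.

(* Boundary of the chain c evaluated at s; this is the row-vector action of the
   matrix [bnd] of the statement (see [mulmx_bnd]). *)
Definition bdc c s : F := \sum_(v | v \notin s) c (v |: s) * sgn (v |: s) v.

Definition cone (w : 'I_n) c s : F := if w \in s then sgn s w * c (s :\ w) else 0.

Lemma sgn_U1 s v w : v \notin s -> sgn (v |: s) w = (-1) ^+ (v < w)%N * sgn s w.
Proof.
move=> vs; rewrite /sgn -exprD; congr (_ ^+ _).
case: (ltnP v w) => hv /=.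
  have -> : [set u in v |: s | (u < w)%N] = v |: [set u in s | (u < w)%N].
    by apply/setP => u; rewrite !inE; case: eqP => // ->; rewrite hv.
  by rewrite cardsU1 inE (negbTE vs).
have -> // : [set u in v |: s | (u < w)%N] = [set u in s | (u < w)%N].
apply/setP => u; rewrite !inE; case: eqP => // -> /=.
by rewrite (negbTE vs) ltnNge hv.
Qed.

Lemma sgn_U1v s v : v \notin s -> sgn (v |: s) v = sgn s v.
Proof. by move=> vs; rewrite sgn_U1 // ltnn mul1r. Qed.

Lemma sign_sqr (m : nat) : (-1) ^+ m * (-1) ^+ m = 1 :> F.
Proof. by rewrite -exprD addnn -mul2n exprM sqrrN !expr1n. Qed.

Lemma sgn_D1 s v w : w \in s -> sgn (s :\ w) v = (-1) ^+ (w < v)%N * sgn s v.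
Proof.
move=> ws; have wD : w \notin s :\ w by rewrite setD11.
by rewrite -[in RHS](setD1K ws) sgn_U1 // mulrA sign_sqr mul1r.
Qed.

Lemma sign_swap (v w : 'I_n) : v != w ->
  (-1) ^+ (v < w)%N = - (-1) ^+ (w < v)%N :> F.
Proof.
move=> vw; case: (ltngtP v w) => h /=; rewrite ?expr0 ?expr1 ?opprK //.
by move: vw; rewrite (val_inj h) eqxx.
Qed.

Lemma cone_homotopy w c s : bdc (cone w c) s + cone w (bdc c) s = c s.
Proof.
rewrite /cone /bdc; case: ifP => ws.
  have wD : w \notin s :\ w by rewrite setD11.
  rewrite [X in _ + _ * X](bigD1 w) //= setD1K // mulrDr.
  rewrite [sgn s w * (c s * _)]mulrCA sign_sqr mulr1 addrCA -[RHS]addr0.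
  congr (_ + _); rewrite mulr_sumr.
  rewrite [X in _ + X](eq_bigl (fun v => v \notin s)); last first.
    by move=> v; rewrite !inE; case: (v =P w) => [->|/eqP vw]; rewrite ?ws ?andbT.
  rewrite -big_split /=; apply: big1 => v vs.
  have vw : v != w by apply: contraNneq vs => ->.
  have -> : (v |: s) :\ w = v |: (s :\ w).
    by apply/setP => u; rewrite !inE; case: (u =P v) => // ->; rewrite vw.
  rewrite (ifT _ _ (_ : w \in v |: s)); last by rewrite !inE ws orbT.
  have vD : v \notin s :\ w by rewrite !inE negb_and vs orbT.
  rewrite sgn_U1 // sgn_U1v // sgn_U1v // sgn_D1 // sign_swap //; ring.
rewrite addr0 (bigD1 w) ?ws //= setU11 /= setU1K ?ws // mulrAC sign_sqr mul1r.
rewrite -[RHS]addr0; congr (_ + _); apply: big1 => v /andP [vs vw].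
by rewrite !inE ws orbF eq_sym (negbTE vw) mul0r.
Qed.

Lemma antisym_sum (g : 'I_n -> 'I_n -> F) :
  (forall u v, g u v = - g v u) -> (forall v, g v v = 0) -> \sum_v \sum_u g v u = 0.
Proof.
move=> ga gd.
have -> : \sum_v \sum_u g v u =
   \sum_(v : 'I_n) \sum_(u : 'I_n) (if (u < v)%N then g v u else 0) +
   \sum_(v : 'I_n) \sum_(u : 'I_n) (if (v < u)%N then g v u else 0).
  rewrite -big_split /=; apply: eq_bigr => v _; rewrite -big_split /=.
  apply: eq_bigr => u _; case: (ltngtP u v) => h; rewrite ?addr0 ?add0r //.
  by rewrite (val_inj h) gd.
rewrite [X in _ + X]exchange_big -big_split /=; apply: big1 => v _.
rewrite -big_split /=; apply: big1 => u _.
by case: ifP => _; rewrite ?addr0 // [g u v]ga subrr.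
Qed.

(* d o d = 0: the two ways of deleting a pair of vertices cancel. *)
Lemma boundary_boundary c s : bdc (bdc c) s = 0.
Proof.
pose g v u := if (v \notin s) && (u \notin s) && (u != v) then
   c (u |: (v |: s)) * sgn (u |: (v |: s)) u * sgn (v |: s) v else 0.
transitivity (\sum_v \sum_u g v u).
  rewrite /bdc big_mkcond /=; apply: eq_bigr => v _.
  case: ifP => vs /=; last by rewrite big1 // => u _; rewrite /g vs.
  rewrite mulr_suml big_mkcond /=; apply: eq_bigr => u _.
  by rewrite /g vs /= !inE negb_or; case: (u =P v) => [->|/eqP uv]; rewrite ?andbF ?andbT.
apply: antisym_sum => [v u|v]; rewrite /g; last by rewrite eqxx andbF.
case: (u =P v) => [->|/eqP uv]; first by rewrite eqxx /= ?andbF oppr0.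
rewrite eq_sym uv /= andbT [(u \notin s) && _]andbC.
case: ifP => [/andP [vs us]|_]; last by rewrite oppr0.
have uv' : u \notin v |: s by rewrite !inE negb_or uv us.
have vu' : v \notin u |: s by rewrite !inE negb_or eq_sym uv vs.
rewrite (sgn_U1v uv') (sgn_U1v vu') (sgn_U1v vs) (sgn_U1v us).
rewrite (sgn_U1 u vs) (sgn_U1 v us) (sign_swap uv) [in c (v |: _)]setUCA /=; ring.
Qed.

Lemma bdcD c1 c2 s : bdc (fun r => c1 r + c2 r) s = bdc c1 s + bdc c2 s.
Proof. by rewrite /bdc -big_split; apply: eq_bigr => v _; rewrite mulrDl. Qed.

Lemma bdcB c1 c2 s : bdc (fun r => c1 r - c2 r) s = bdc c1 s - bdc c2 s.
Proof. by rewrite /bdc -sumrB; apply: eq_bigr => v _; rewrite mulrBl. Qed.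

Lemma eq_bdc c1 c2 : c1 =1 c2 -> bdc c1 =1 bdc c2.
Proof. by move=> e12 s; apply: eq_bigr => v _; rewrite e12. Qed.

Section Cliques.
Variable E : rel 'I_n.

Definition clq s := [forall u in s, forall v in s, (u != v) ==> E u v].

Definition cl (U : {set 'I_n}) m s := [&& s \subset U, #|s| == m & clq s].

Definition supp c (P : pred {set 'I_n}) := forall s, c s != 0 -> P s.

Definition dominated (U : {set 'I_n}) (v w : 'I_n) : Prop :=
  [/\ v \in U, w \in U, w != v &
      forall u, u \in U -> u != v -> E u v -> E v w && ((u == w) || E u w)].

Lemma clqP s : reflect (forall u v, u \in s -> v \in s -> u != v -> E u v) (clq s).
Proof.
apply: (iffP forallP) => [h u v us vs uv|h u].
  by move: (h u); rewrite us /= => /forallP /(_ v); rewrite vs uv.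
by apply/implyP => us; apply/forallP => v; apply/implyP => vs; apply/implyP; apply: h.
Qed.

Lemma clq_sub s r : r \subset s -> clq s -> clq r.
Proof. by move=> rs /clqP h; apply/clqP => u v ur vr; apply: h; apply: (subsetP rs). Qed.

Lemma cl_setD1 U m v s : v \notin s -> cl U m s -> cl (U :\ v) m s.
Proof.
move=> vs /and3P [sU sm sc]; apply/and3P; split => //; apply/subsetP => u us.
by rewrite !inE (subsetP sU u us) andbT; apply: contraNneq vs => <-.
Qed.

Lemma bdc_supp U m e : supp e (cl U m.+1) -> supp (bdc e) (cl U m).
Proof.
move=> se s; apply: contraNT => nc; apply/eqP/big1 => u us.
have [->|/se /and3P [] sU] := eqVneq (e (u |: s)) 0; first by rewrite mul0r.
rewrite cardsU1 us add1n eqSS => sm sc; case/and3P: nc; split => //.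
  by apply: subset_trans sU; apply: subsetUr.
by apply: clq_sub sc; apply: subsetUr.
Qed.

Hypothesis Esym : symmetric E.

Lemma clique_extend U v w s : dominated U v w -> s \subset U -> clq s ->
  v \in s -> (1 < #|s|)%N -> clq (w |: s).
Proof.
case=> _ _ _ dom sU /clqP sc vs /(other_elem v) [u us uv].
have Evw : E v w by case/andP: (dom u (subsetP sU u us) uv (sc u v us vs uv)).
have Ew y : y \in s -> y != w -> E y w.
  move=> ys yw; case: (y =P v) => [->//|/eqP yv].
  case/andP: (dom y (subsetP sU y ys) yv (sc y v ys vs yv)) => _.
  by rewrite (negbTE yw).
apply/clqP => y z; rewrite !in_setU1 => /orP [/eqP ->|ys] /orP [/eqP ->|zs];
  rewrite ?eqxx // => yz.
- by rewrite Esym; apply: Ew; rewrite // eq_sym.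
- exact: Ew.
- exact: sc.
Qed.

Definition through (v : 'I_n) c s : F := if v \in s then c s else 0.

Lemma cone_through_supp U m v w c : (1 < m)%N -> dominated U v w ->
  supp c (cl U m) -> supp (cone w (through v c)) (cl U m.+1).
Proof.
move=> hm dvw cs r; rewrite /cone /through; case: ifP => [wr|]; last by rewrite eqxx.
case: ifP => [vr|]; last by rewrite mulr0 eqxx.
rewrite mulf_eq0 negb_or => /andP [_ /cs /and3P [sU /eqP sm sc]].
have [_ wU _ _] := dvw.
have wD : w \notin r :\ w by rewrite setD11.
rewrite -(setD1K wr) /cl subUset sub1set wU sU cardsU1 wD sm eqxx /=.
by apply: clique_extend dvw sU sc vr _; rewrite sm.
Qed.

Lemma push_off U m v w c : (1 < m)%N -> dominated U v w ->
  supp c (cl U m) -> (forall s, bdc c s = 0) ->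
  supp (fun s => c s - bdc (cone w (through v c)) s) (cl (U :\ v) m).
Proof.
move=> hm dvw cs cz s h.
have [_ _ wv _] := dvw.
have vs : v \notin s.
  apply: contraNN h => vs; have -> : c s = through v c s by rewrite /through vs.
  rewrite -{1}(cone_homotopy w (through v c) s) addrAC subrr add0r /cone.
  case: ifP => ws //; rewrite (_ : bdc _ _ = 0) ?mulr0 // -(cz (s :\ w)).
  apply: eq_bigr => u _.
  by rewrite /through !inE vs (eq_sym v w) wv orbT.
apply: cl_setD1 vs _; move: h; have [->|/cs //] := eqVneq (c s) 0.
by rewrite sub0r oppr_eq0 => /(bdc_supp (cone_through_supp hm dvw cs)).
Qed.

Hypothesis dom_all : forall U : {set 'I_n}, (1 < #|U|)%N -> exists v w, dominated U v w.

Lemma cycle_is_boundary U m c : (1 < m)%N -> supp c (cl U m) ->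
  (forall s, bdc c s = 0) -> exists e, supp e (cl U m.+1) /\ forall s, bdc e s = c s.
Proof.
move=> hm; elim: {U}#|U|.+1 {-2}U (ltnSn #|U|) c => // N IH U UN c cs cz.
have [U1|U2] := leqP #|U| 1.
  exists (fun _ => 0); split => s; first by rewrite eqxx.
  rewrite /bdc big1 ?mulr0 => [|u _]; last by rewrite mul0r.
  apply/esym/eqP; apply: contraT => /cs /and3P [/subset_leq_card sU /eqP sm _].
  lia.
have [v [w dvw]] := dom_all U2; have [vU _ _ _] := dvw.
set e1 := cone w (through v c).
have c'z s : bdc (fun s => c s - bdc e1 s) s = 0.
  by rewrite bdcB cz boundary_boundary subrr.
have UvN : (#|U :\ v| < N)%N by rewrite (cardsD1 v U) vU in UN.
have [e2 [se2 be2]] := IH _ UvN _ (push_off hm dvw cs cz) c'z.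
exists (fun s => e1 s + e2 s); split => [s|s]; last by rewrite bdcD be2 addrC subrK.
have [->|/(cone_through_supp hm dvw cs) //] := eqVneq (e1 s) 0.
rewrite add0r => /se2 /and3P [sU sm sc]; apply/and3P; split => //.
exact: subset_trans sU (subsetDl _ _).
Qed.

End Cliques.

Definition coef (tau sg : {set 'I_n}) : F := \sum_(v in tau | sg == tau :\ v) sgn tau v.

Lemma bdc_coef c sg : bdc c sg = \sum_tau c tau * coef tau sg.
Proof.
rewrite /coef; under eq_bigr do rewrite mulr_sumr big_mkcond /=.
rewrite exchange_big /= /bdc big_mkcond /=; apply: eq_bigr => v _.
rewrite -big_mkcond /=.
rewrite (eq_bigl (fun tau => (v \notin sg) && (tau == v |: sg))); last first.
  move=> tau /=; apply/andP/andP => [[vt /eqP ->]|[vs /eqP ->]].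
    by rewrite setD11 setD1K.
  by rewrite setU11 setU1K.
by case: ifP => vs /=; [rewrite (big_pred1 (v |: sg)) | rewrite big_pred0].
Qed.

Definition chain_of (A : {set {set 'I_n}}) (u : 'rV[F]_#|A|) tau : F :=
  \sum_(a < #|A|) (if enum_val a == tau then u 0 a else 0).

Lemma chain_of_enum (A : {set {set 'I_n}}) (u : 'rV[F]_#|A|) b :
  chain_of u (enum_val b) = u 0 b.
Proof.
rewrite /chain_of (bigD1 b) //= eqxx big1 ?addr0 // => a ab.
by rewrite (inj_eq enum_val_inj) (negbTE ab).
Qed.

Lemma chain_of_supp (A : {set {set 'I_n}}) (u : 'rV[F]_#|A|) :
  supp (chain_of u) [in A].
Proof.
move=> tau; apply: contraNT => tA; apply/eqP/big1 => a _.
by case: eqP => // ta; case/negP: tA; rewrite -ta; apply: enum_valP.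
Qed.

Lemma chain_of_row (A : {set {set 'I_n}}) e :
  supp e [in A] -> chain_of (\row_(a < #|A|) e (enum_val a)) =1 e.
Proof.
move=> se tau; have [tA|tA] := boolP (tau \in A).
  by rewrite -(enum_rankK_in tA tA) chain_of_enum mxE.
rewrite (_ : e tau = 0); last by apply/eqP; apply: contraNT tA => /se.
by apply/eqP; apply: contraNT tA => /chain_of_supp.
Qed.

Lemma mulmx_bnd (R : realFieldType) (M : 'M[R]_n) t k
    (u : 'rV[F]_#|simplices M t k.+1|) b :
  (u *m bnd F M t k) 0 b = bdc (chain_of u) (enum_val b).
Proof.
rewrite mxE bdc_coef; under [RHS]eq_bigr do rewrite /chain_of mulr_suml.
rewrite exchange_big /=; apply: eq_bigr => a _; rewrite mxE.
rewrite [RHS](bigD1 (enum_val a)) //= eqxx [X in _ + X]big1 ?addr0 // => tau.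
by rewrite eq_sym => /negbTE ->; rewrite mul0r.
Qed.

Lemma betti_vanish (R : realFieldType) (M : 'M[R]_n) (t : R) k :
  symmetric (Gedge M t) ->
  (forall U : {set 'I_n}, (1 < #|U|)%N -> exists v w, dominated (Gedge M t) U v w) ->
  betti F M t k.+1 = 0%N.
Proof.
move=> Esym dom_all; rewrite /betti; apply/eqP; rewrite subn_eq0; apply: mxrankS.
apply/row_subP => i; set u := row i _.
have uA : u *m bnd F M t k = 0 by rewrite -row_mul mulmx_ker row0.
clearbody u.
have S_cl j s : (s \in simplices M t j) = cl (Gedge M t) setT j.+1 s.
  by rewrite inE /cl subsetT.
have cs : supp (chain_of u) (cl (Gedge M t) setT k.+2).
  by move=> s /chain_of_supp; rewrite S_cl.
have cz sg : bdc (chain_of u) sg = 0.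
  have [sS|sN] := boolP (sg \in simplices M t k).
    by rewrite -(enum_rankK_in sS sS) -mulmx_bnd uA mxE.
  by apply/eqP; apply: contraNT sN => /(bdc_supp cs); rewrite S_cl.
have [e [se be]] := cycle_is_boundary Esym dom_all (isT : (1 < k.+2)%N) cs cz.
apply/submxP; exists (\row_(a < #|simplices M t k.+2|) e (enum_val a)).
apply/rowP => b; rewrite mulmx_bnd -chain_of_enum -be; apply: eq_bdc.
by move=> s; rewrite chain_of_row // => r /se; rewrite S_cl.
Qed.

End Chains.

Lemma Gedge_mono (R : realFieldType) n (M : 'M[R]_n) t i j u v :
  u != v -> M u v <= M i j -> Gedge M t i j -> Gedge M t u v.
Proof.
move=> uv Muv /andP [_ le]; rewrite /Gedge uv /=; apply: le_trans le.
rewrite ler_nat ltnS; apply: subset_leq_card; apply/subsetP => p.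
by rewrite !inE => /andP [-> /lt_le_trans ->].
Qed.

Lemma Gedge_sym (R : realFieldType) n (M : 'M[R]_n) t :
  (forall i j, M i j = M j i) -> symmetric (Gedge M t).
Proof.
move=> Ms i j; apply/idP/idP => h; have /andP [ij _] := h;
  by apply: Gedge_mono h; rewrite 1?eq_sym // Ms.
Qed.

Section RankOneGraphs.
Variables (R : realFieldType) (n : nat) (x : 'I_n -> R) (E : rel 'I_n).
Hypothesis Emono : forall i j u v : 'I_n,
  u != v -> - (x u * x v) <= - (x i * x j) -> E i j -> E u v.

(* Two vertices of U with x <= 0 yield a dominated vertex: the dominator is the
   largest such x if some edge has weight >= 0, and the smallest one otherwise. *)
Lemma dominated_nonpos (U : {set 'I_n}) :
  (1 < #|[set u in U | (x u <= 0)%R]|)%N -> exists v w, dominated E U v w.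
Proof.
set S := [set u in U | _] => S2; have [a [_ [aS _ _]]] := card_gt1P S2.
have SP u : u \in S -> u \in U /\ x u <= 0 by rewrite inE => /andP [].
have [/existsP [i0 /existsP [j0 /andP [Eij M0]]]|/existsPn noE] :=
  boolP [exists i, exists j, E i j && (0 <= - (x i * x j))].
- (* some edge has a nonnegative weight, so all nonpositive weights are edges *)
  have Enonpos u v : u != v -> - (x u * x v) <= 0 -> E u v.
    by move=> uv h; apply: Emono uv (le_trans h M0) Eij.
  case: (arg_maxP x aS) => w wS wmax.
  have [v vS vw] := other_elem w S2.
  have [[vU xv] [wU xw]] := (SP v vS, SP w wS).
  exists v, w; split; rewrite 1?eq_sym // => u uU uv Euv.
  have -> : E v w by apply: Enonpos; [exact: vw | nra].
  case: (u =P w) => [//|/eqP uw] /=.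
  have [xu|xu] := leP (x u) 0; first by apply: Enonpos => //; nra.
  have xvw : x v <= x w := wmax v vS.
  apply: Emono uw _ Euv; nra.
- (* every edge has a negative weight, so neighbours in S have negative values *)
  case: (arg_minP x aS) => w wS wmin.
  have [v vS vw] := other_elem w S2.
  have [[vU xv] [wU xw]] := (SP v vS, SP w wS).
  exists v, w; split; rewrite 1?eq_sym // => u uU uv Euv.
  have Mneg : - (x u * x v) < 0.
    by move/existsPn/(_ v): (noE u); rewrite Euv ltNge.
  have xu : x u < 0 by nra.
  have uS : u \in S by rewrite inE uU ltW.
  have xwu : x w <= x u := wmin u uS.
  have xwv : x w <= x v := wmin v vS.
  have -> : E v w by apply: Emono Euv; [exact: vw | nra].
  case: (u =P w) => [//|/eqP uw] /=; apply: Emono uw _ Euv; nra.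
Qed.
End RankOneGraphs.

Lemma rank_one_dominated (R : realFieldType) n (x : 'I_n -> R) (E : rel 'I_n) :
  (forall i j u v : 'I_n, u != v -> - (x u * x v) <= - (x i * x j) -> E i j -> E u v) ->
  forall U : {set 'I_n}, (1 < #|U|)%N -> exists v w, dominated E U v w.
Proof.
move=> Emono U U2.
have [|Sn] := ltnP 1 #|[set u in U | (x u <= 0)%R]|; first exact: dominated_nonpos.
have [Sp|Sp] := ltnP 1 #|[set u in U | (0 <= x u)%R]|.
  (* the weights are invariant under x |-> -x, which swaps the two signs *)
  apply: (@dominated_nonpos _ _ (fun i => - x i)) => [i j u v|].
    by rewrite !mulrNN; apply: Emono.
  by rewrite (_ : [set u in U | _] = [set u in U | (0 <= x u)%R]) //;
    apply/setP => u; rewrite !inE oppr_le0.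
(* otherwise U is a pair {a, b}, and a is dominated by b *)
have U2' : #|U| = 2%N.
  apply/anti_leq; rewrite U2 andbT; apply: leq_trans (leq_add Sn Sp).
  apply: leq_trans (leq_card_setU _ _); apply/subset_leq_card/subsetP => u uU.
  by rewrite !inE uU le_total.
case/card_gt1P: U2 => a [b [aU bU ab]].
have Uab : U = [set a; b].
  by apply/esym/eqP; rewrite eqEcard subUset !sub1set aU bU cards2 ab U2'.
exists a, b; split; rewrite // 1?eq_sym // => u; rewrite Uab !inE.
case/orP=> /eqP ->; first by rewrite eqxx.
by move=> _ Eba; rewrite eqxx andbT; apply: Emono Eba; rewrite // mulrC.
Qed.

Theorem betti_rank_one (F : fieldType) (R : realFieldType) n (x : 'I_n -> R) t k :
  betti F (\matrix_(i, j) (- (x i * x j))) t k.+1 = 0%N.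
Proof.
apply: betti_vanish; first by apply: Gedge_sym => i j; rewrite !mxE mulrC.
by apply: (rank_one_dominated (x := x)) => i j u v uv Mij; apply: Gedge_mono uv _; rewrite !mxE.
Qed.

Theorem theorem3 (F : fieldType) (R : realFieldType) (n l : nat) (x : 'I_n -> R) :
  (2 <= n)%N -> (1 <= l)%N -> (l <= n - 1)%N ->
  (forall i j : 'I_n, (i <= j)%N -> x i <= x j) ->
  (forall i : 'I_n, (i < l)%N -> x i < 0) ->
  (forall i : 'I_n, (l <= i)%N -> 0 <= x i) ->
  offdiag_distinct (\matrix_(i, j) (- (x i * x j))) ->
  forall (k : nat) (t : R), (0 < k)%N -> 0 <= t <= 1 ->
    betti F (\matrix_(i, j) (- (x i * x j))) t k = 0%N.
Proof. by move=> _ _ _ _ _ _ _ [//|k] t _ _; apply: betti_rank_one. Qed.
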